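(* Let $T$ be a tree, $c:V(T)\to\mathbb{R}_{>0}$, and let $T'$ be a subtree of $T$ (with costs given by the restriction of $c$). Then $k(T',c)\le k(T,c)$.
   Context: For a tree $T$ with costs $c:V(T)\to\mathbb{R}_{>0}$ and $t\ge 0$, a heavy module with respect to $t$ is a set $H\subseteq V(T)$ such that $T[H]$ is connected, $c(v)>t$ for all $v\in H$, and $H$ is maximal with these properties. $k(T,c,t)$ is the number of heavy modules with respect to $t$, and $k(T,c)=\max_{t\ge 0}k(T,c,t)$. *)

From HB Require Import structures.
From mathcomp Require Import all_boot all_order all_algebra.
From mathcomp Require Import boolp reals.
Set Implicit Arguments. Unset Strict Implicit. Unset Printing Implicit Defensive.
Import Order.TTheory GRing.Theory Num.Theory.
Local Open Scope ring_scope.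

Section Defs.
Variable V : finType.

Definition simple_graph (e : rel V) : Prop := symmetric e /\ irreflexive e.

Definition connected_in (e : rel V) (S : {set V}) : Prop :=
  forall x y, x \in S -> y \in S ->
    exists p : seq V, [&& path e x p, last x p == y & all (fun v => v \in S) p].

Definition acyclic (e : rel V) : Prop :=
  forall (x : V) (p : seq V),
    ~ [&& (2 <= size p)%N, uniq (x :: p), path e x p & e (last x p) x].

Definition is_tree (e : rel V) : Prop :=
  simple_graph e /\ (0 < #|V|)%N /\ connected_in e [set: V] /\ acyclic e.

(* S induces a subtree of the tree (V,e): nonempty and T[S] connected
   (acyclicity is inherited) *)
Definition subtree_set (e : rel V) (S : {set V}) : Prop :=
  S != set0 /\ connected_in e S.

Variable R : realType.

Definition heavy_set (e : rel V) (S : {set V}) (c : V -> R) (t : R) (H : {set V}) : Prop :=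
  [/\ H \subset S, H != set0, connected_in e H & forall v, v \in H -> t < c v].

Definition heavy_module (e : rel V) (S : {set V}) (c : V -> R) (t : R) (H : {set V}) : Prop :=
  heavy_set e S c t H /\
  forall H' : {set V}, H \subset H' -> heavy_set e S c t H' -> H' = H.

Definition k_t (e : rel V) (S : {set V}) (c : V -> R) (t : R) : nat :=
  #|[set H : {set V} | `[< heavy_module e S c t H >]]|.

(* k(T[S], c) = max_{t >= 0} k(T[S], c, t); the values are bounded by #|V|,
   so this bounded maximum over attained values is the maximum. *)
Definition k_max (e : rel V) (S : {set V}) (c : V -> R) : nat :=
  \max_(n < #|V|.+1 | `[< exists2 t : R, 0 <= t & k_t e S c t = n >]) (n : nat).

End Defs.

From HB Require Import structures.
From mathcomp Require Import all_boot all_order all_algebra.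
From mathcomp Require Import boolp reals.
Import Order.TTheory GRing.Theory Num.Theory.
Set Implicit Arguments. Unset Strict Implicit. Unset Printing Implicit Defensive.
Local Open Scope ring_scope.

(* The heavy modules of T[S] w.r.t. t are the connected components of the
   subgraph induced by the vertices of S of cost > t.  Send the component of x
   in T[S] to the component of x in T.  This map is injective because T is a
   tree: the unique simple path between two heavy vertices of S lies both in
   S (which is connected) and in any heavy walk joining them.  Hence
   k(T[S], c, t) <= k(T, c, t) for every t. *)

Lemma leq_card_imset_factor (T T1 T2 : finType) (A : {pred T})
    (F : T -> T1) (G : T -> T2) :
  {in A &, forall x y, G x = G y -> F x = F y} -> (#|F @: A| <= #|G @: A|)%N.
Proof.
move=> GF; pose h Y := omap F [pick x in A | G x == Y].
have hG : {in A, Some \o F =1 h \o G}.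
  move=> x xA; rewrite /h /=; case: pickP => [y /andP[yA /eqP Gyx]|/(_ x)].
    by rewrite /= (GF y x) // Gyx.
  by rewrite xA eqxx.
rewrite -(card_imset _ (@Some_inj _)) -imset_comp (eq_in_imset hG) imset_comp.
exact: leq_imset_card.
Qed.

Section InducedSubgraph.
Variables (V : finType) (e : rel V).
Implicit Types (P Q : pred V) (x y : V).

Definition induced (P : pred V) : rel V := [rel x y | [&& P x, P y & e x y]].

Definition component (P : pred V) (x : V) : {set V} :=
  [set y | connect (induced P) x y].

Lemma path_induced P x p : P x -> path (induced P) x p = path e x p && all P p.
Proof.
elim: p x => //= y p IH x Px; rewrite /induced /= Px.
by case Py: (P y); rewrite /= ?andbF // IH // andbA.
Qed.

Lemma connect_induced_closed P x y : P x -> connect (induced P) x y -> P y.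
Proof.
move=> Px /connectP[p]; rewrite path_induced // => /andP[_ Pp] ->.
have : all P (x :: p) by rewrite /= Px.
by move/allP; apply; exact: mem_last.
Qed.

Lemma connected_in_connect P (H : {set V}) x y :
  connected_in e H -> {subset H <= P} -> x \in H -> y \in H ->
  connect (induced P) x y.
Proof.
move=> cH HP xH yH; have [p /and3P[pe /eqP <- Hp]] := cH x y xH yH.
apply/connectP; exists p => //; rewrite path_induced ?pe /=; last exact: HP.
by apply/allP => v /(allP Hp) /HP.
Qed.

Hypothesis esym : symmetric e.

Lemma induced_sym P : symmetric (induced P).
Proof. by move=> x y; rewrite /induced /= esym andbCA. Qed.

Lemma component_eq P x y :
  connect (induced P) x y -> component P x = component P y.
Proof.
move=> xy; apply/setP => z; rewrite !inE.
by rewrite (same_connect (sym_connect_sym (induced_sym P)) xy).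
Qed.

Lemma component_connected P x : connected_in e (component P x).
Proof.
move=> y z; rewrite !inE => xy xz.
have /connectP[p pP ->] : connect (induced P) y z.
  by apply: connect_trans xz; rewrite (sym_connect_sym (induced_sym P)).
exists p; rewrite eqxx (sub_path _ pP) => [/=|u v /and3P[]//].
apply/allP => v vp; rewrite inE; apply: connect_trans xy _.
by apply: (path_connect pP); rewrite inE vp orbT.
Qed.

Lemma path_rcons_rev x q z : path e x (rcons q z) -> path e z (rcons (rev q) x).
Proof.
move=> h; have := rev_path e x (rcons q z).
rewrite last_rcons belast_rcons rev_cons => ->.
by rewrite (@eq_path _ _ e) // => a b; rewrite esym.
Qed.

Hypothesis ac : acyclic e.

Lemma acyclic_disjoint_paths x z p q :
  uniq (x :: rcons p z) -> uniq (x :: rcons q z) -> ~~ has (mem q) p ->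
  path e x (rcons p z) -> path e x (rcons q z) -> p ++ q = [::].
Proof.
move=> up uq dpq pp qp; case pq0: (p ++ q) => [//|w r]; exfalso.
apply: (ac (x := x) (p := rcons p z ++ rev q)).
have /andP[qrev ecl] : path e z (rev q) && e (last z (rev q)) x.
  by rewrite -rcons_path path_rcons_rev.
have /andP[xzq] : (x \notin rcons q z) && uniq (rcons q z) := uq.
rewrite rcons_uniq => /andP[zq uq'].
have /norP[xz xq] : ~~ ((x == z) || (x \in q)) by rewrite -in_cons -mem_rcons.
apply/and4P; split.
- by rewrite size_cat size_rcons size_rev addSn -size_cat pq0.
- rewrite -cat_cons cat_uniq up rev_uniq uq' andbT /=; apply/hasPn => v.
  rewrite mem_rev => vq; have /negbTE vp := contraL (hasPn dpq v) vq.
  rewrite !inE mem_rcons !inE vp orbF.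
  by apply/norP; split; apply: contraTneq vq => ->.
- by rewrite cat_path pp last_rcons qrev.
- by rewrite last_cat last_rcons.
Qed.

Lemma acyclic_uniq_path_eq x p q : uniq (x :: p) -> uniq (x :: q) ->
  path e x p -> path e x q -> last x p = last x q -> p = q.
Proof.
elim: p x q => [|a p IH] x [|b q] //.
- by move=> _ /andP[xnq _] _ _ /= lq; rewrite lq mem_last in xnq.
- by move=> /andP[xnp _] _ _ _ /= lp; rewrite -lp mem_last in xnp.
have [<-|ab] := eqVneq a b.
  by move=> /andP[_ up] /andP[_ uq] /andP[_ pp] /andP[_ pq] /= lq; rewrite (IH a q).
move=> up uq pp pq lq; exfalso.
have hP : has (mem (b :: q)) (a :: p).
  apply/hasP; exists (last a p); first exact: mem_last.
  by rewrite [last a p]lq /= mem_last.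
have hab : head x (a :: p) != head x (b :: q) by [].
(* z is the first vertex of a :: p on b :: q, so the prefixes up to z are disjoint *)
case: (split_find hP) up pp hab => z p1 p2 zQ hp1 up pp.
case/splitPr: zQ uq pq hp1 => q1 q2 uq pq hp1 hab.
have up1 : uniq (x :: rcons p1 z) by move: up; rewrite -cat_cons cat_uniq => /andP[].
have uq1 : uniq (x :: rcons q1 z).
  by move: uq; rewrite -cat_rcons -cat_cons cat_uniq => /andP[].
have dpq : ~~ has (mem q1) p1.
  by apply: contra hp1; apply: sub_has => v; rewrite /= mem_cat => ->.
move: pp pq; rewrite cat_path -cat_rcons cat_path => /andP[pp1 _] /andP[pq1 _].
have := acyclic_disjoint_paths up1 uq1 dpq pp1 pq1.
by case: (p1) hab => [|? ?]; case: (q1); rewrite //= eqxx.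
Qed.

Lemma connect_induced_predI P Q x y : P x -> Q x ->
  connect (induced P) x y -> connect (induced Q) x y ->
  connect (induced (predI P Q)) x y.
Proof.
move=> Px Qx /connectP[p]; rewrite path_induced // => /andP[pe Pp] ->.
case/connectP=> q; rewrite path_induced // => /andP[qe Qq].
case: (shortenP qe) => s se us sq; case: (shortenP pe) => r re ur rp lrs.
have rs : r = s := acyclic_uniq_path_eq ur us re se lrs.
apply/connectP; exists r => //; rewrite path_induced /= ?Px // re /=.
apply/allP => v vr; rewrite /= (allP Pp v (rp v vr)).
by rewrite (allP Qq v (sq v _)) // -rs.
Qed.

End InducedSubgraph.

Section HeavyModules.
Variables (R : realType) (V : finType) (e : rel V) (c : V -> R).

Definition heavy (S : {set V}) (t : R) : pred V := fun v => (v \in S) && (t < c v).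

Lemma in_heavy S t v : (v \in heavy S t) = (v \in S) && (t < c v).
Proof. by []. Qed.

Lemma heavy_set_sub_component S t H x :
  heavy_set e S c t H -> x \in H -> H \subset component e (heavy S t) x.
Proof.
case=> sHS _ cH gt xH; apply/subsetP => y yH; rewrite inE.
apply: connected_in_connect cH _ xH yH => v vH.
by rewrite in_heavy (subsetP sHS) // gt.
Qed.

Hypothesis esym : symmetric e.

Lemma heavy_module_component S t x :
  x \in heavy S t -> heavy_module e S c t (component e (heavy S t) x).
Proof.
move=> hx; have xC : x \in component e (heavy S t) x by rewrite inE connect0.
have closed y : y \in component e (heavy S t) x -> y \in heavy S t.
  by rewrite inE => /(connect_induced_closed hx).
have hC : heavy_set e S c t (component e (heavy S t) x).
  split; first by apply/subsetP => y /closed/andP[].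
  - by apply/set0Pn; exists x.
  - exact: component_connected.
  - by move=> v /closed/andP[].
split=> // H' sub hH'; apply/eqP; rewrite eqEsubset sub andbT.
exact: heavy_set_sub_component hH' (subsetP sub x xC).
Qed.

Lemma heavy_module_componentE S t H x :
  heavy_module e S c t H -> x \in H -> H = component e (heavy S t) x.
Proof.
move=> [hH maxH] xH; symmetry; apply: maxH (heavy_set_sub_component hH xH) _.
have [sHS _ _ gt] := hH.
by case: (@heavy_module_component S t x); rewrite // in_heavy (subsetP sHS) ?gt.
Qed.

Lemma k_tE S t : k_t e S c t = #|component e (heavy S t) @: heavy S t|.
Proof.
apply: eq_card => H; rewrite inE; apply/asboolP/imsetP.
  move=> hH; have [[sHS /set0Pn[x xH] _ gt] _] := hH.
  exists x; last exact: heavy_module_componentE.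
  by rewrite in_heavy (subsetP sHS) ?gt.
by case=> x hx ->; exact: heavy_module_component.
Qed.

Lemma k_t_le_card S t : (k_t e S c t <= #|V|)%N.
Proof. by rewrite k_tE (leq_trans (leq_imset_card _ _) (max_card _)). Qed.

Lemma k_t_subtree S t : acyclic e -> connected_in e S ->
  (k_t e S c t <= k_t e [set: V] c t)%N.
Proof.
move=> ac cS; rewrite !k_tE.
apply: leq_trans (leq_card_imset_factor _) _; last first.
  by apply/subset_leq_card/imsetS/subsetP => v; rewrite !in_heavy in_setT => /andP[].
move=> x y /[!in_heavy] /andP[xS xt] /andP[yS _] eqT; apply: component_eq => //.
have xyT : connect (induced e (heavy [set: V] t)) x y.
  by move/setP/(_ y): eqT; rewrite !inE connect0.
have xyS : connect (induced e [in S]) x y by apply: connected_in_connect cS _ xS yS.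
have hxT : heavy [set: V] t x by rewrite /heavy in_setT.
have := connect_induced_predI esym ac xS hxT xyS xyT.
rewrite (@eq_connect _ _ (induced e (heavy S t))) // => u v.
by rewrite /induced /= /heavy !in_setT.
Qed.

End HeavyModules.

Theorem mainTheorem2 (R : realType) (V : finType) (e : rel V) (c : V -> R)
    (S : {set V}) :
  is_tree e -> (forall v, 0 < c v) -> subtree_set e S ->
  (k_max e S c <= k_max e [set: V] c)%N.
Proof.
move=> [[esym _] [_ [_ ac]]] _ [_ cS].
apply/bigmax_leqP => n /asboolP[t t0 <-].
have ktV : (k_t e [set: V] c t < #|V|.+1)%N by rewrite ltnS (k_t_le_card c esym).
apply: leq_trans (k_t_subtree c esym t ac cS) _.
apply: (@leq_bigmax_cond _ _ (fun n : 'I_#|V|.+1 => (n : nat)) (Ordinal ktV)).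
by apply/asboolP; exists t.
Qed.
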